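(* Let $z$ be a real function of one real variable, twice continuously differentiable near $t=0$ with $\dot z(0)\neq0$, and let $f(u_+,u_-)$ be defined near $(0,0)$ implicitly by $$f=\frac{2u_+}{\dot z(t)}+z(t),\qquad u_-=\frac{u_+}{\dot z(t)^2}+t,$$ with $t=t(u_+,u_-)$ the solution of the second equation near $t=0$. Then $f$ satisfies (i) $f$ is analytic near $(u_+,u_-)=(0,0)$ and (ii) $f(u_+,u_-)=u_++u_-+O(|u_\pm|^2)$, if and only if $z$ is analytic near $t=0$ and $z(t)=t+O(t^2)$.
   Context: $\dot z$ denotes the derivative of $z$; analytic near a point means given by a convergent power series on a neighborhood of that point; $O(|u_\pm|^2)$ denotes terms of total order at least two in $(u_+,u_-)$. *)

From Stdlib Require Import Reals Lra.
From Coquelicot Require Import Coquelicot.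
Open Scope R_scope.

Definition C2_near0 (z : R -> R) : Prop :=
  exists d, 0 < d /\ forall x, Rabs x < d ->
    ex_derive z x /\ ex_derive (Derive z) x /\ continuous (Derive_n z 2) x.

Definition analytic1_near0 (z : R -> R) : Prop :=
  exists (a : nat -> R) (r : R), 0 < r /\ forall x, Rabs x < r ->
    ex_series (fun n => Rabs (a n) * Rabs x ^ n) /\
    z x = Series (fun n => a n * x ^ n).

(* f is analytic near (0,0): given by a double power series centred at (0,0),
   converging absolutely on a neighbourhood (polydisc) of (0,0).  The series is
   summed by total degree. *)
Definition analytic2_near0 (f : R -> R -> R) : Prop :=
  exists (a : nat -> nat -> R) (r : R), 0 < r /\ forall x y,
    Rabs x < r -> Rabs y < r ->
    ex_series (fun n => sum_f_R0 (fun i => Rabs (a i (n - i)%nat) * Rabs x ^ i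
                                             * Rabs y ^ (n - i)) n) /\
    f x y = Series (fun n => sum_f_R0 (fun i => a i (n - i)%nat * x ^ i
                                                 * y ^ (n - i)) n).

Definition id_plus_O2_1 (z : R -> R) : Prop :=
  exists C d, 0 < d /\ forall x, Rabs x < d -> Rabs (z x - x) <= C * x ^ 2.

Definition sum_plus_O2_2 (f : R -> R -> R) : Prop :=
  exists C d, 0 < d /\ forall x y, Rabs x < d -> Rabs y < d ->
    Rabs (f x y - (x + y)) <= C * (x ^ 2 + y ^ 2).

Definition local_solution (z : R -> R) (tt : R -> R -> R) : Prop :=
  (forall eps, 0 < eps -> exists d, 0 < d /\ forall x y,
      Rabs x < d -> Rabs y < d -> Rabs (tt x y) < eps) /\
  (exists d, 0 < d /\ forall x y, Rabs x < d -> Rabs y < d ->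
      y = x / (Derive z (tt x y)) ^ 2 + tt x y).

Definition f_of (z : R -> R) (tt : R -> R -> R) (x y : R) : R :=
  2 * x / Derive z (tt x y) + z (tt x y).

(* Putting u_+ = 0 forces t = u_-, so f(0, u_-) = z(u_-): analyticity of f and
   f = u_+ + u_- + O(|u|^2) restrict to the two conditions on z.

   Conversely, write z' = 1 + Q with Q(0) = 0 and s = u_- - t.  The defining
   equation of t becomes the fixed-point equation
     s = u_+ - s (2 Q(u_- - s) + Q(u_- - s)^2),
   and f = 2 s (1 + Q(u_- - s)) + z(u_- - s).  As s has no constant term, the
   fixed-point map determines the homogeneous components of a formal solution
   degree by degree.  For the weighted l1 norm sum |a_ij| r^(i+j), which is
   submultiplicative and controls substitution into one-variable series, the map
   sends the ball of radius 2r into itself once sum |Q_m| (3r)^m <= 1/5, so the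
   formal solution, and with it f, converges on the polydisc of radius r.  The
   given solution t equals u_- - s because z' is Lipschitz near 0, which makes
   small solutions of the defining equation unique.  Finally
   f - u_+ - u_- = - s (z'(t) - 1)^2 + (z(t) - t) is O(|u|^2) as soon as
   z' = 1 + O(t) and z = t + O(t^2). *)

From Stdlib Require Import Reals Lra Lia Psatz.
From Coquelicot Require Import Coquelicot.
Open Scope R_scope.

Lemma sum_f_R0_swap (a : nat -> nat -> R) n m :
  sum_f_R0 (fun i => sum_f_R0 (fun j => a i j) m) n =
  sum_f_R0 (fun j => sum_f_R0 (fun i => a i j) n) m.
Proof.
  induction n as [|n IHn]; simpl; [reflexivity|].
  now rewrite IHn, <- sum_plus.
Qed.

Lemma sum_f_R0_mult_r (F : nat -> R) c N :
  sum_f_R0 F N * c = sum_f_R0 (fun k => F k * c) N.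
Proof. now rewrite Rmult_comm, scal_sum. Qed.

Lemma sum_f_R0_mult_l (F : nat -> R) c N :
  c * sum_f_R0 F N = sum_f_R0 (fun k => c * F k) N.
Proof. rewrite scal_sum. apply sum_eq; intros; ring. Qed.

Lemma sum_f_R0_abs_le (F G : nat -> R) N :
  (forall i, (i <= N)%nat -> Rabs (F i) <= G i) -> Rabs (sum_f_R0 F N) <= sum_f_R0 G N.
Proof. intros H. eapply Rle_trans; [apply sum_f_R0_triangle | now apply sum_Rle]. Qed.

Lemma sum_f_R0_nonneg (F : nat -> R) N :
  (forall i, (i <= N)%nat -> 0 <= F i) -> 0 <= sum_f_R0 F N.
Proof.
  intros H. rewrite <- (sum_eq_R0 (fun _ => 0) N) by auto. now apply sum_Rle.
Qed.

Lemma sum_f_R0_trunc (F : nat -> R) n N : (n <= N)%nat ->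
  (forall i, (n < i <= N)%nat -> F i = 0) -> sum_f_R0 F N = sum_f_R0 F n.
Proof.
  induction N as [|N IHN]; intros Hn Hz.
  - now replace n with 0%nat by lia.
  - destruct (Nat.eq_dec n (S N)) as [->|]; [reflexivity|].
    simpl. rewrite IHN, (Hz (S N)) by (lia || (intros; apply Hz; lia)). ring.
Qed.

Lemma sum_f_R0_indicator (g : nat -> R) k n : (k <= n)%nat ->
  sum_f_R0 (fun i => if Nat.eqb k i then g i else 0) n = g k.
Proof.
  intros Hk. rewrite (sum_f_R0_trunc _ k n Hk).
  - destruct k as [|k]; [reflexivity|].
    rewrite tech5, Nat.eqb_refl, sum_eq_R0; [ring|].
    intros i Hi. destruct (Nat.eqb_spec (S k) i); [lia|reflexivity].
  - intros i Hi. destruct (Nat.eqb_spec k i); [lia|reflexivity].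
Qed.

Lemma sum_f_R0_monotone (F : nat -> R) n N : (n <= N)%nat -> (forall i, 0 <= F i) ->
  sum_f_R0 F n <= sum_f_R0 F N.
Proof.
  intros Hn HF. induction Hn as [|N _ IH]; [lra|]. simpl. specialize (HF (S N)). lra.
Qed.

Lemma is_series_partial_le (a : nat -> R) l N : (forall n, 0 <= a n) -> is_series a l ->
  sum_f_R0 a N <= l.
Proof. intros Ha Hl. apply sum_incr; [now apply is_series_Reals | exact Ha]. Qed.

Lemma Series_nonneg (a : nat -> R) : (forall n, 0 <= a n) -> ex_series a -> 0 <= Series a.
Proof.
  intros Ha Hex. apply Rle_trans with (sum_f_R0 a 0); [apply Ha|].
  apply is_series_partial_le; [exact Ha | now apply Series_correct].
Qed.

Lemma is_series_single_term (a : nat -> R) k : (forall n, n <> k -> a n = 0) ->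
  is_series a (a k).
Proof.
  intros Hz. apply is_series_Reals. intros eps Heps. exists k. intros n Hn.
  rewrite (sum_f_R0_trunc a k n) by (auto; intros; apply Hz; lia).
  destruct k as [|k]; simpl; unfold Rdist.
  - rewrite Rminus_diag, Rabs_R0. lra.
  - rewrite sum_eq_R0 by (intros; apply Hz; lia).
    replace (0 + a (S k) - a (S k)) with 0 by ring. rewrite Rabs_R0. lra.
Qed.

Lemma ex_series_le_R (a b : nat -> R) :
  (forall n, Rabs (a n) <= b n) -> ex_series b -> ex_series a.
Proof. exact (ex_series_le (K := R_AbsRing) (V := R_CompleteNormedModule) a b). Qed.

Lemma ex_series_nonneg_bounded (a : nat -> R) B : (forall n, 0 <= a n) ->
  (forall N, sum_f_R0 a N <= B) -> ex_series a /\ Series a <= B.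
Proof.
  intros Ha HB.
  destruct (growing_cv (fun N => sum_f_R0 a N)) as [l Hl].
  - intro n. simpl. specialize (Ha (S n)). lra.
  - exists B. now intros x [i ->].
  - assert (Hs : is_series a l) by now apply is_series_Reals.
    split; [now exists l|].
    rewrite (is_series_unique _ _ Hs).
    apply (@Rle_cv_lim _ (fun _ => B) _ _ HB Hl).
    intros eps Heps. exists 0%nat. intros. unfold Rdist. rewrite Rminus_diag, Rabs_R0. lra.
Qed.

Section TriangularFubini.

Variables (e : nat -> nat -> R) (V : nat -> R) (W : R).
Hypothesis e_triangular : forall m n, (n < m)%nat -> e m n = 0.
Hypothesis e_rows : forall m, is_series (e m) (V m).

Lemma sum_f_R0_triangle_rows N :
  sum_f_R0 (fun n => sum_f_R0 (fun m => e m n) n) N =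
  sum_f_R0 (fun m => sum_f_R0 (e m) N) N.
Proof.
  rewrite <- (sum_f_R0_swap (fun n m => e m n)). apply sum_eq; intros n Hn.
  symmetry. apply sum_f_R0_trunc; [exact Hn|]. intros i Hi. apply e_triangular. lia.
Qed.

Lemma is_series_triangle_nonneg : (forall m n, 0 <= e m n) -> is_series V W ->
  is_series (fun n => sum_f_R0 (fun m => e m n) n) W.
Proof.
  intros e_ge0 HW.
  assert (V_ge0 : forall m, 0 <= V m).
  { intro m. apply Rle_trans with (sum_f_R0 (e m) 0); [apply e_ge0|].
    apply is_series_partial_le; auto. }
  apply is_series_Reals. intros eps Heps.
  destruct (proj1 (is_series_Reals _ _) HW (eps / 2)) as [M HM]; [lra|].
  assert (Hrows : Un_cv (fun N => sum_f_R0 (fun m => sum_f_R0 (e m) N) M) (sum_f_R0 V M)).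
  { clear HM. induction M as [|M IH]; simpl.
    - now apply is_series_Reals.
    - apply CV_plus; [exact IH | now apply is_series_Reals]. }
  destruct (Hrows (eps / 2)) as [N0 HN0]; [lra|].
  exists (max N0 M). intros N HN. rewrite sum_f_R0_triangle_rows.
  specialize (HM M ltac:(lia)). specialize (HN0 N ltac:(lia)). unfold Rdist in *.
  assert (upper : sum_f_R0 (fun m => sum_f_R0 (e m) N) N <= W).
  { apply Rle_trans with (sum_f_R0 V N).
    - apply sum_Rle. intros m _. apply is_series_partial_le; auto.
    - apply is_series_partial_le; auto. }
  assert (lower : sum_f_R0 (fun m => sum_f_R0 (e m) N) M <=
                  sum_f_R0 (fun m => sum_f_R0 (e m) N) N).
  { apply sum_f_R0_monotone; [lia|]. intro. apply sum_f_R0_nonneg. auto. }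
  assert (sum_f_R0 V M <= W) by (apply is_series_partial_le; auto).
  apply Rabs_def2 in HM as [HM1 HM2]. apply Rabs_def2 in HN0 as [HN1 HN2].
  apply Rabs_def1; lra.
Qed.

End TriangularFubini.

(* Reduced to the nonnegative case through [E + e] and [E]. *)
Lemma is_series_triangle (e E : nat -> nat -> R) (v V : nat -> R) W :
  (forall m n, Rabs (e m n) <= E m n) ->
  (forall m n, (n < m)%nat -> e m n = 0) -> (forall m n, (n < m)%nat -> E m n = 0) ->
  (forall m, is_series (e m) (v m)) -> (forall m, is_series (E m) (V m)) -> is_series V W ->
  ex_series v /\ is_series (fun n => sum_f_R0 (fun m => e m n) n) (Series v).
Proof.
  intros Hle Hz HZ Hv HV HW.
  assert (Hvle : forall m, Rabs (v m) <= V m).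
  { intro m. rewrite <- (is_series_unique _ _ (Hv m)), <- (is_series_unique _ _ (HV m)).
    apply Rle_trans with (Series (fun n => Rabs (e m n))).
    - apply Series_Rabs. apply (ex_series_le_R _ (E m)); [|now exists (V m)].
      intro n. rewrite Rabs_Rabsolu. apply Hle.
    - apply Series_le; [|now exists (V m)]. intro n. split; [apply Rabs_pos | apply Hle]. }
  assert (Hexv : ex_series v) by (apply (ex_series_le_R _ V); [exact Hvle | now exists W]).
  split; [exact Hexv|].
  assert (Hsum : is_series (fun n => sum_f_R0 (fun m => E m n + e m n) n) (W + Series v)).
  { apply (is_series_triangle_nonneg _ (fun m => V m + v m)).
    - intros m n Hmn. rewrite Hz, HZ by exact Hmn. ring.
    - intro m. now apply (is_series_plus (K := R_AbsRing) (V := R_NormedModule)).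
    - intros m n. specialize (Hle m n). apply Rabs_le_between in Hle. lra.
    - apply (is_series_plus (K := R_AbsRing) (V := R_NormedModule)); [exact HW|].
      now apply Series_correct. }
  assert (HE : is_series (fun n => sum_f_R0 (fun m => E m n) n) W).
  { apply (is_series_triangle_nonneg _ V); auto.
    intros m n. eapply Rle_trans; [apply Rabs_pos | apply Hle]. }
  replace (Series v) with (W + Series v - W) by ring.
  eapply is_series_ext;
    [|exact (is_series_minus (K := R_AbsRing) (V := R_NormedModule) _ _ _ _ Hsum HE)].
  intro n. simpl. rewrite sum_plus. unfold minus, plus, opp; simpl. ring.
Qed.

(** * Double power series graded by total degree *)

(* [a n i] is the coefficient of [x ^ i * y ^ (n - i)], so that a double power
   series is stored by homogeneous components, the summation order used in
   [analytic2_near0]; entries with [n < i] are never read. *)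
Definition ps2 := nat -> nat -> R.

Definition homog (a : ps2) (x y : R) (n : nat) : R :=
  sum_f_R0 (fun i => a n i * x ^ i * y ^ (n - i)) n.

Definition eval2 (a : ps2) (x y : R) : R := Series (homog a x y).

Definition ps2_add (a b : ps2) : ps2 := fun n i => a n i + b n i.
Definition ps2_scal (c : R) (a : ps2) : ps2 := fun n i => c * a n i.
Definition ps2_abs (a : ps2) : ps2 := fun n i => Rabs (a n i).
Definition ps2_one : ps2 := fun n _ => if Nat.eqb n 0 then 1 else 0.
Definition ps2_X : ps2 := fun n i => if (Nat.eqb n 1 && Nat.eqb i 1)%bool then 1 else 0.
Definition ps2_Y : ps2 := fun n i => if (Nat.eqb n 1 && Nat.eqb i 0)%bool then 1 else 0.

Definition ps2_mul (a b : ps2) : ps2 := fun n i =>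
  sum_f_R0 (fun k => sum_f_R0 (fun j => sum_f_R0 (fun l =>
    if Nat.eqb (j + l) i then a k j * b (n - k)%nat l else 0) (n - k)) k) n.

Fixpoint ps2_pow (u : ps2) (m : nat) : ps2 :=
  match m with O => ps2_one | S m' => ps2_mul u (ps2_pow u m') end.

(* Truncating at [m <= n] is exact only when [u] has no constant term. *)
Definition ps2_comp (g : nat -> R) (u : ps2) : ps2 := fun n i =>
  sum_f_R0 (fun m => g m * ps2_pow u m n i) n.

Lemma homog_add a b x y n : homog (ps2_add a b) x y n = homog a x y n + homog b x y n.
Proof. unfold homog, ps2_add. rewrite <- sum_plus. apply sum_eq; intros; ring. Qed.

Lemma homog_scal c a x y n : homog (ps2_scal c a) x y n = c * homog a x y n.
Proof. unfold homog, ps2_scal. rewrite sum_f_R0_mult_l. apply sum_eq; intros; ring. Qed.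

Lemma homog_one x y n : homog ps2_one x y n = if Nat.eqb n 0 then 1 else 0.
Proof.
  unfold homog, ps2_one. destruct n; [simpl; ring|].
  apply sum_eq_R0; intros; simpl; ring.
Qed.

Lemma homog_X x y n : homog ps2_X x y n = if Nat.eqb n 1 then x else 0.
Proof.
  unfold homog, ps2_X. destruct n as [|[|n]]; [simpl; ring .. |].
  apply sum_eq_R0; intros; simpl; ring.
Qed.

Lemma homog_Y x y n : homog ps2_Y x y n = if Nat.eqb n 1 then y else 0.
Proof.
  unfold homog, ps2_Y. destruct n as [|[|n]]; [simpl; ring .. |].
  apply sum_eq_R0; intros; simpl; ring.
Qed.

Lemma homog_mul a b x y n :
  homog (ps2_mul a b) x y n = sum_f_R0 (fun k => homog a x y k * homog b x y (n - k)) n.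
Proof.
  unfold homog, ps2_mul.
  transitivity (sum_f_R0 (fun i => sum_f_R0 (fun k => sum_f_R0 (fun j => sum_f_R0 (fun l =>
    if Nat.eqb (j + l) i then a k j * b (n - k)%nat l * (x ^ i * y ^ (n - i)) else 0)
      (n - k)) k) n) n).
  { apply sum_eq; intros i Hi. rewrite Rmult_assoc, sum_f_R0_mult_r.
    apply sum_eq; intros k Hk. rewrite sum_f_R0_mult_r.
    apply sum_eq; intros j Hj. rewrite sum_f_R0_mult_r.
    apply sum_eq; intros l Hl. destruct (Nat.eqb (j + l) i); ring. }
  rewrite sum_f_R0_swap. apply sum_eq; intros k Hk.
  rewrite sum_f_R0_swap, sum_f_R0_mult_r. apply sum_eq; intros j Hj.
  rewrite sum_f_R0_swap, sum_f_R0_mult_l. apply sum_eq; intros l Hl.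
  rewrite (sum_f_R0_indicator (fun i => a k j * b (n - k)%nat l * (x ^ i * y ^ (n - i))))
    by lia.
  replace (n - (j + l))%nat with ((k - j) + (n - k - l))%nat by lia.
  rewrite !pow_add. ring.
Qed.

Lemma homog_comp g u x y n :
  homog (ps2_comp g u) x y n = sum_f_R0 (fun m => g m * homog (ps2_pow u m) x y n) n.
Proof.
  unfold homog, ps2_comp.
  transitivity (sum_f_R0 (fun i => sum_f_R0 (fun m =>
    g m * (ps2_pow u m n i * x ^ i * y ^ (n - i))) n) n).
  { apply sum_eq; intros i Hi. rewrite Rmult_assoc, sum_f_R0_mult_r.
    apply sum_eq; intros; ring. }
  rewrite sum_f_R0_swap. apply sum_eq; intros m Hm. now rewrite sum_f_R0_mult_l.
Qed.

Lemma ps2_pow_low u m n i : u 0%nat 0%nat = 0 -> (n < m)%nat -> ps2_pow u m n i = 0.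
Proof.
  intros Hu. revert n i. induction m as [|m IHm]; intros n i Hn; [lia|].
  simpl. unfold ps2_mul.
  apply sum_eq_R0; intros k Hk. apply sum_eq_R0; intros j Hj. apply sum_eq_R0; intros l Hl.
  destruct (Nat.eqb (j + l) i); [|reflexivity].
  destruct k as [|k].
  - replace j with 0%nat by lia. rewrite Hu. ring.
  - rewrite IHm by lia. ring.
Qed.

Lemma homog_pow_low u m x y n : u 0%nat 0%nat = 0 -> (n < m)%nat ->
  homog (ps2_pow u m) x y n = 0.
Proof. intros Hu Hn. apply sum_eq_R0. intros i Hi. rewrite ps2_pow_low; auto. ring. Qed.

Definition dominated (a A : ps2) : Prop :=
  forall n i, (i <= n)%nat -> Rabs (a n i) <= A n i.

Lemma dominated_abs a : dominated a (ps2_abs a).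
Proof. intros n i _. apply Rle_refl. Qed.

Lemma dominated_abs_l a A : dominated a A -> dominated (ps2_abs a) A.
Proof. intros H n i Hi. unfold ps2_abs. rewrite Rabs_Rabsolu. auto. Qed.

Lemma dominated_refl A : (forall n i, (i <= n)%nat -> 0 <= A n i) -> dominated A A.
Proof. intros H n i Hi. rewrite Rabs_right; [lra | apply Rle_ge; auto]. Qed.

Lemma dominated_add a b A B : dominated a A -> dominated b B ->
  dominated (ps2_add a b) (ps2_add A B).
Proof.
  intros Ha Hb n i Hi. eapply Rle_trans; [apply Rabs_triang|].
  specialize (Ha n i Hi). specialize (Hb n i Hi). unfold ps2_add. lra.
Qed.

Lemma dominated_scal c a A : dominated a A -> dominated (ps2_scal c a) (ps2_scal (Rabs c) A).
Proof.
  intros Ha n i Hi. unfold ps2_scal. rewrite Rabs_mult.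
  apply Rmult_le_compat_l; [apply Rabs_pos | auto].
Qed.

Lemma dominated_mul a b A B : dominated a A -> dominated b B ->
  dominated (ps2_mul a b) (ps2_mul A B).
Proof.
  intros Ha Hb n i Hi. unfold ps2_mul.
  apply sum_f_R0_abs_le; intros k Hk. apply sum_f_R0_abs_le; intros j Hj.
  apply sum_f_R0_abs_le; intros l Hl.
  destruct (Nat.eqb (j + l) i); [|rewrite Rabs_R0; lra].
  rewrite Rabs_mult. apply Rmult_le_compat; try apply Rabs_pos; [apply Ha | apply Hb]; lia.
Qed.

Lemma dominated_pow u U m : dominated u U -> dominated (ps2_pow u m) (ps2_pow U m).
Proof.
  intros Hu. induction m as [|m IHm]; simpl; [|now apply dominated_mul].
  apply dominated_refl. intros n i _. unfold ps2_one. destruct (Nat.eqb n 0); lra.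
Qed.

Lemma dominated_comp g u U : dominated u U ->
  dominated (ps2_comp g u) (ps2_comp (fun m => Rabs (g m)) U).
Proof.
  intros Hu n i Hi. unfold ps2_comp. apply sum_f_R0_abs_le. intros m Hm.
  rewrite Rabs_mult. apply Rmult_le_compat_l; [apply Rabs_pos|]. now apply dominated_pow.
Qed.

(* The weighted l1 norm [sum |a n i| r ^ n]; its finiteness is absolute
   convergence on the closed polydisc of radius [r]. *)
Definition abs_conv (r : R) (a : ps2) : Prop := ex_series (homog (ps2_abs a) r r).
Definition ps2_norm (r : R) (a : ps2) : R := Series (homog (ps2_abs a) r r).
Definition norm_le (r : R) (a : ps2) (s : R) : Prop := abs_conv r a /\ ps2_norm r a <= s.

Section Evaluation.

Variables r x y : R.
Hypotheses (x_le : Rabs x <= r) (y_le : Rabs y <= r).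

Lemma homog_le a A n : dominated a A -> Rabs (homog a x y n) <= homog A r r n.
Proof.
  intros Ha. apply sum_f_R0_abs_le. intros i Hi.
  rewrite !Rabs_mult, <- !RPow_abs.
  assert (Rabs x ^ i <= r ^ i) by (apply pow_incr; split; [apply Rabs_pos | exact x_le]).
  assert (Rabs y ^ (n - i) <= r ^ (n - i))
    by (apply pow_incr; split; [apply Rabs_pos | exact y_le]).
  apply Rmult_le_compat; try apply Rmult_le_compat; auto;
    try apply Rmult_le_pos; try apply pow_le; try apply Rabs_pos.
Qed.

Lemma ex_series_abs_homog a : abs_conv r a -> ex_series (fun n => Rabs (homog a x y n)).
Proof.
  intros Ha. apply (ex_series_le_R _ (homog (ps2_abs a) r r)); [|exact Ha].
  intro n. rewrite Rabs_Rabsolu. apply homog_le, dominated_abs.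
Qed.

Lemma ex_series_homog a : abs_conv r a -> ex_series (homog a x y).
Proof. intros Ha. now apply ex_series_Rabs, ex_series_abs_homog. Qed.

Lemma eval2_abs_le a : abs_conv r a -> Rabs (eval2 a x y) <= ps2_norm r a.
Proof.
  intros Ha. eapply Rle_trans; [now apply Series_Rabs, ex_series_abs_homog|].
  apply Series_le; [|exact Ha]. intro n. split; [apply Rabs_pos | apply homog_le, dominated_abs].
Qed.

Lemma eval2_add a b : abs_conv r a -> abs_conv r b ->
  eval2 (ps2_add a b) x y = eval2 a x y + eval2 b x y.
Proof.
  intros Ha Hb. unfold eval2. rewrite <- Series_plus by now apply ex_series_homog.
  apply Series_ext. intro n. apply homog_add.
Qed.

Lemma is_series_homog_mul a b : abs_conv r a -> abs_conv r b ->
  is_series (homog (ps2_mul a b) x y) (eval2 a x y * eval2 b x y).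
Proof.
  intros Ha Hb. eapply is_series_ext; [intro n; symmetry; apply homog_mul|].
  apply is_series_mult; try apply Series_correct;
    auto using ex_series_homog, ex_series_abs_homog.
Qed.

Lemma eval2_mul a b : abs_conv r a -> abs_conv r b ->
  eval2 (ps2_mul a b) x y = eval2 a x y * eval2 b x y.
Proof. intros Ha Hb. now apply is_series_unique, is_series_homog_mul. Qed.

End Evaluation.

Lemma eval2_scal c a x y : eval2 (ps2_scal c a) x y = c * eval2 a x y.
Proof.
  unfold eval2. rewrite <- Series_scal_l. apply Series_ext. intro n. apply homog_scal.
Qed.

Lemma is_series_homog_X x y : is_series (homog ps2_X x y) x.
Proof.
  replace x with (homog ps2_X x y 1) at 2 by now rewrite homog_X.
  apply is_series_single_term. intros n Hn. rewrite homog_X.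
  destruct (Nat.eqb_spec n 1); [lia | reflexivity].
Qed.

Lemma is_series_homog_Y x y : is_series (homog ps2_Y x y) y.
Proof.
  replace y with (homog ps2_Y x y 1) at 2 by now rewrite homog_Y.
  apply is_series_single_term. intros n Hn. rewrite homog_Y.
  destruct (Nat.eqb_spec n 1); [lia | reflexivity].
Qed.

Lemma eval2_X x y : eval2 ps2_X x y = x.
Proof. apply is_series_unique, is_series_homog_X. Qed.

Lemma eval2_Y x y : eval2 ps2_Y x y = y.
Proof. apply is_series_unique, is_series_homog_Y. Qed.

Lemma is_series_homog_one x y : is_series (homog ps2_one x y) 1.
Proof.
  assert (E : homog ps2_one x y 0 = 1) by now rewrite homog_one.
  rewrite <- E. apply is_series_single_term. intros n Hn. rewrite homog_one.
  destruct (Nat.eqb_spec n 0); [lia | reflexivity].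
Qed.

Section Norm.

Variable r : R.
Hypothesis r_ge0 : 0 <= r.

Let r_abs_le : Rabs r <= r.
Proof. rewrite Rabs_right; lra. Qed.

Lemma homog_abs_ge0 a n : 0 <= homog (ps2_abs a) r r n.
Proof.
  apply sum_f_R0_nonneg. intros i Hi.
  apply Rmult_le_pos; [apply Rmult_le_pos|]; try apply Rabs_pos; apply pow_le; lra.
Qed.

Lemma ps2_norm_ge0 a : abs_conv r a -> 0 <= ps2_norm r a.
Proof.
  intros Ha. apply Series_nonneg; [apply homog_abs_ge0 | exact Ha].
Qed.

Lemma norm_le_ge0 a s : norm_le r a s -> 0 <= s.
Proof. intros [Ha Hs]. pose proof (ps2_norm_ge0 a Ha). lra. Qed.

Lemma norm_le_weaken a s t : norm_le r a s -> s <= t -> norm_le r a t.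
Proof. intros [Ha Hs] Hst. split; [exact Ha | lra]. Qed.

Lemma norm_le_of_dominated a A (s : R) : dominated a A -> is_series (homog A r r) s ->
  norm_le r a s.
Proof.
  intros Hd Hs.
  assert (Hle : forall n, Rabs (homog (ps2_abs a) r r n) <= homog A r r n)
    by (intro n; now apply homog_le, dominated_abs_l).
  split.
  - apply (ex_series_le_R _ _ Hle). now exists s.
  - rewrite <- (is_series_unique _ _ Hs). apply Series_le; [|now exists s].
    intro n. split; [apply homog_abs_ge0|]. specialize (Hle n).
    rewrite Rabs_right in Hle by (apply Rle_ge, homog_abs_ge0). exact Hle.
Qed.

Lemma norm_le_abs a s : norm_le r a s -> norm_le r (ps2_abs a) s.
Proof.
  intros Ha. apply (norm_le_weaken _ (ps2_norm r a)); [|apply Ha].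
  apply (norm_le_of_dominated _ (ps2_abs a)).
  - apply dominated_abs_l, dominated_abs.
  - apply Series_correct, Ha.
Qed.

Lemma norm_le_add a b s t : norm_le r a s -> norm_le r b t -> norm_le r (ps2_add a b) (s + t).
Proof.
  intros [Ha Hs] [Hb Ht]. apply (norm_le_weaken _ (ps2_norm r a + ps2_norm r b)); [|lra].
  apply (norm_le_of_dominated _ (ps2_add (ps2_abs a) (ps2_abs b))).
  - apply dominated_add; apply dominated_abs.
  - eapply is_series_ext; [intro n; symmetry; apply homog_add|].
    apply (is_series_plus (K := R_AbsRing) (V := R_NormedModule)); now apply Series_correct.
Qed.

Lemma norm_le_scal c a s : norm_le r a s -> norm_le r (ps2_scal c a) (Rabs c * s).
Proof.
  intros [Ha Hs]. apply (norm_le_weaken _ (Rabs c * ps2_norm r a)).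
  - apply (norm_le_of_dominated _ (ps2_scal (Rabs c) (ps2_abs a))).
    + apply dominated_scal, dominated_abs.
    + eapply is_series_ext; [intro n; symmetry; apply homog_scal|].
      apply (is_series_scal_l (K := R_AbsRing) (V := R_NormedModule)).
      now apply Series_correct.
  - apply Rmult_le_compat_l; [apply Rabs_pos | exact Hs].
Qed.

Lemma norm_le_mul a b s t : norm_le r a s -> norm_le r b t -> norm_le r (ps2_mul a b) (s * t).
Proof.
  intros Ha Hb.
  destruct (norm_le_abs a s Ha) as [Ha' _]. destruct (norm_le_abs b t Hb) as [Hb' _].
  apply (norm_le_weaken _ (ps2_norm r a * ps2_norm r b)).
  - apply (norm_le_of_dominated _ (ps2_mul (ps2_abs a) (ps2_abs b))).
    + apply dominated_mul; apply dominated_abs.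
    + now apply (is_series_homog_mul r).
  - destruct Ha as [Ha Hs], Hb as [Hb Ht].
    apply Rmult_le_compat; auto using ps2_norm_ge0.
Qed.

Lemma norm_le_one : norm_le r ps2_one 1.
Proof.
  apply (norm_le_of_dominated _ ps2_one); [|apply is_series_homog_one].
  apply dominated_refl. intros n i _. unfold ps2_one. destruct (Nat.eqb n 0); lra.
Qed.

Lemma norm_le_pow u s m : norm_le r u s -> norm_le r (ps2_pow u m) (s ^ m).
Proof.
  intros Hu. induction m as [|m IHm]; [apply norm_le_one | now apply norm_le_mul].
Qed.

Lemma norm_le_X : norm_le r ps2_X r.
Proof.
  apply (norm_le_of_dominated _ ps2_X); [|apply is_series_homog_X].
  apply dominated_refl. intros n i _. unfold ps2_X. destruct (_ && _)%bool; lra.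
Qed.

Lemma norm_le_Y : norm_le r ps2_Y r.
Proof.
  apply (norm_le_of_dominated _ ps2_Y); [|apply is_series_homog_Y].
  apply dominated_refl. intros n i _. unfold ps2_Y. destruct (_ && _)%bool; lra.
Qed.

End Norm.

Lemma is_series_homog_pow r x y s u m : 0 <= r -> Rabs x <= r -> Rabs y <= r ->
  norm_le r u s -> is_series (homog (ps2_pow u m) x y) (eval2 u x y ^ m).
Proof.
  intros r_ge0 x_le y_le u_le.
  induction m as [|m IHm]; [apply is_series_homog_one|].
  simpl. rewrite <- (is_series_unique _ _ IHm).
  apply (is_series_homog_mul r); auto; [apply u_le | apply (norm_le_pow r r_ge0 u s m u_le)].
Qed.

Section Substitution.

Variables (r x y s : R) (g : nat -> R) (u : ps2).
Hypotheses (r_ge0 : 0 <= r) (x_le : Rabs x <= r) (y_le : Rabs y <= r).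
Hypotheses (u_00 : u 0%nat 0%nat = 0) (u_le : norm_le r u s).
Hypothesis g_conv : ex_series (fun m => Rabs (g m) * s ^ m).

Lemma is_series_homog_comp :
  is_series (homog (ps2_comp g u) x y) (PSeries g (eval2 u x y)).
Proof.
  assert (norm_u : 0 <= ps2_norm r u <= s)
    by (destruct u_le as [Hu Hs]; split; auto using ps2_norm_ge0).
  assert (row_sums : ex_series (fun m => Rabs (g m) * ps2_norm r u ^ m)).
  { apply (ex_series_le_R _ (fun m => Rabs (g m) * s ^ m)); [|exact g_conv]. intro m.
    rewrite Rabs_mult, Rabs_Rabsolu, (Rabs_right (ps2_norm r u ^ m))
      by (apply Rle_ge, pow_le; lra).
    apply Rmult_le_compat_l; [apply Rabs_pos | apply pow_incr; lra]. }
  destruct (is_series_triangle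
    (fun m n => g m * homog (ps2_pow u m) x y n)
    (fun m n => Rabs (g m) * homog (ps2_pow (ps2_abs u) m) r r n)
    (fun m => g m * eval2 u x y ^ m) (fun m => Rabs (g m) * ps2_norm r u ^ m)
    (Series (fun m => Rabs (g m) * ps2_norm r u ^ m))) as [_ Hdiag].
  - intros m n. rewrite Rabs_mult. apply Rmult_le_compat_l; [apply Rabs_pos|].
    apply (homog_le r); auto. apply dominated_pow, dominated_abs.
  - intros m n Hmn. rewrite homog_pow_low by auto. ring.
  - intros m n Hmn. rewrite homog_pow_low; [ring | | exact Hmn].
    unfold ps2_abs. rewrite u_00. apply Rabs_R0.
  - intro m. apply (is_series_scal_l (K := R_AbsRing) (V := R_NormedModule)).
    now apply (is_series_homog_pow r _ _ s).
  - intro m. apply (is_series_scal_l (K := R_AbsRing) (V := R_NormedModule)).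
    apply (is_series_homog_pow r r r s (ps2_abs u)); [lra | | | now apply norm_le_abs];
      rewrite Rabs_right; lra.
  - now apply Series_correct.
  - eapply is_series_ext; [|exact Hdiag]. intro n. symmetry. apply homog_comp.
Qed.

End Substitution.

Section SubstitutionBounds.

Variables (r s : R) (g : nat -> R) (u : ps2).
Hypotheses (r_ge0 : 0 <= r) (u_00 : u 0%nat 0%nat = 0) (u_le : norm_le r u s).
Hypothesis g_conv : ex_series (fun m => Rabs (g m) * s ^ m).

Lemma eval2_comp x y : Rabs x <= r -> Rabs y <= r ->
  eval2 (ps2_comp g u) x y = PSeries g (eval2 u x y).
Proof. intros Hx Hy. apply is_series_unique. now apply (is_series_homog_comp r x y s). Qed.

Lemma norm_le_comp : norm_le r (ps2_comp g u) (Series (fun m => Rabs (g m) * s ^ m)).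
Proof.
  assert (norm_u : 0 <= ps2_norm r u <= s)
    by (destruct u_le as [Hu Hs]; split; auto using ps2_norm_ge0).
  apply (norm_le_weaken r _ (Series (fun m => Rabs (g m) * ps2_norm r u ^ m))).
  - apply (norm_le_of_dominated r r_ge0 _ (ps2_comp (fun m => Rabs (g m)) (ps2_abs u)));
      [apply dominated_comp, dominated_abs|].
    apply (is_series_homog_comp r r r s); try (rewrite Rabs_right; lra); auto.
    + unfold ps2_abs. rewrite u_00. apply Rabs_R0.
    + now apply norm_le_abs.
    + eapply ex_series_ext; [|exact g_conv]. intro m. now rewrite Rabs_Rabsolu.
  - apply Series_le; [|exact g_conv]. intro m. split.
    + apply Rmult_le_pos; [apply Rabs_pos | apply pow_le; lra].
    + apply Rmult_le_compat_l; [apply Rabs_pos | apply pow_incr; lra].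
Qed.

End SubstitutionBounds.

(** * The fixed-point equation *)

Definition y_minus (a : ps2) : ps2 := ps2_add ps2_Y (ps2_scal (-1) a).

(* With [z' = 1 + Q] and [s = u_- - t], the defining equation of [t] becomes
   the fixed-point equation [s = u_+ - s (2 Q(u_- - s) + Q(u_- - s)^2)]. *)
Definition fp_correction (q : nat -> R) (a : ps2) : ps2 :=
  ps2_add (ps2_scal 2 (ps2_comp q (y_minus a)))
          (ps2_mul (ps2_comp q (y_minus a)) (ps2_comp q (y_minus a))).

Definition fp_map (q : nat -> R) (a : ps2) : ps2 :=
  ps2_add ps2_X (ps2_scal (-1) (ps2_mul a (fp_correction q a))).

Definition fp_iter (q : nat -> R) (k : nat) : ps2 := Nat.iter k (fp_map q) (fun _ _ => 0).

(* Degree [n] of the [(n+1)]-th iterate is already final. *)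
Definition fp_solution (q : nat -> R) : ps2 := fun n i => fp_iter q (S n) n i.

Definition agree_below (d : nat) (a b : ps2) : Prop :=
  forall n i, (n < d)%nat -> a n i = b n i.

Lemma agree_below_add d a a' b b' :
  agree_below d a a' -> agree_below d b b' -> agree_below d (ps2_add a b) (ps2_add a' b').
Proof. intros Ha Hb n i Hn. unfold ps2_add. now rewrite Ha, Hb. Qed.

Lemma agree_below_scal d c a a' :
  agree_below d a a' -> agree_below d (ps2_scal c a) (ps2_scal c a').
Proof. intros Ha n i Hn. unfold ps2_scal. now rewrite Ha. Qed.

Lemma agree_below_mul d a a' b b' :
  agree_below d a a' -> agree_below d b b' -> agree_below d (ps2_mul a b) (ps2_mul a' b').
Proof.
  intros Ha Hb n i Hn. unfold ps2_mul.
  apply sum_eq; intros k Hk. apply sum_eq; intros j Hj. apply sum_eq; intros l Hl.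
  rewrite Ha, Hb by lia. reflexivity.
Qed.

(* A product of two series without constant terms sees only degrees [< n] of
   its factors in degree [n]. *)
Lemma agree_below_mul_S d a a' b b' :
  a 0%nat 0%nat = 0 -> a' 0%nat 0%nat = 0 -> b 0%nat 0%nat = 0 -> b' 0%nat 0%nat = 0 ->
  agree_below d a a' -> agree_below d b b' -> agree_below (S d) (ps2_mul a b) (ps2_mul a' b').
Proof.
  intros Ha0 Ha0' Hb0 Hb0' Ha Hb n i Hn. unfold ps2_mul.
  apply sum_eq; intros k Hk. apply sum_eq; intros j Hj. apply sum_eq; intros l Hl.
  destruct (Nat.eqb (j + l) i); [|reflexivity].
  destruct (Nat.eq_dec k 0) as [->|Hk0].
  - replace j with 0%nat by lia. rewrite Ha0, Ha0'. ring.
  - destruct (Nat.eq_dec k n) as [->|Hkn].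
    + replace l with 0%nat by lia. replace (n - n)%nat with 0%nat by lia.
      rewrite Hb0, Hb0'. ring.
    + rewrite Ha, Hb by lia. reflexivity.
Qed.

Lemma agree_below_comp d g u u' : agree_below d u u' ->
  agree_below d (ps2_comp g u) (ps2_comp g u').
Proof.
  intros Hu n i Hn. unfold ps2_comp. apply sum_eq; intros m Hm.
  assert (Hpow : agree_below d (ps2_pow u m) (ps2_pow u' m)).
  { induction m as [|m IHm]; [now intros ? ? ?|].
    apply agree_below_mul; [exact Hu | apply IHm; lia]. }
  now rewrite Hpow.
Qed.

Lemma ps2_comp_00 g u : ps2_comp g u 0%nat 0%nat = g 0%nat.
Proof. unfold ps2_comp, ps2_pow, ps2_one. simpl. ring. Qed.

Lemma ps2_mul_00 a b : ps2_mul a b 0%nat 0%nat = a 0%nat 0%nat * b 0%nat 0%nat.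
Proof. unfold ps2_mul. simpl. ring. Qed.

Section FormalFixedPoint.

Variable q : nat -> R.
Hypothesis q_0 : q 0%nat = 0.

Lemma fp_map_00 a : fp_map q a 0%nat 0%nat = 0.
Proof.
  unfold fp_map, fp_correction, ps2_add, ps2_scal.
  rewrite !ps2_mul_00, ps2_comp_00, q_0. unfold ps2_X. simpl. ring.
Qed.

Lemma agree_below_fp_map d a a' : a 0%nat 0%nat = 0 -> a' 0%nat 0%nat = 0 ->
  agree_below d a a' -> agree_below (S d) (fp_map q a) (fp_map q a').
Proof.
  intros Ha0 Ha0' Ha.
  assert (Hq : agree_below d (ps2_comp q (y_minus a)) (ps2_comp q (y_minus a')))
    by (apply agree_below_comp, agree_below_add; [now intros ? ? ? | now apply agree_below_scal]).
  apply agree_below_add; [now intros ? ? ?|]. apply agree_below_scal.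
  apply agree_below_mul_S; auto.
  - unfold fp_correction, ps2_add, ps2_scal. rewrite ps2_mul_00, ps2_comp_00, q_0. ring.
  - unfold fp_correction, ps2_add, ps2_scal. rewrite ps2_mul_00, ps2_comp_00, q_0. ring.
  - apply agree_below_add; [now apply agree_below_scal | now apply agree_below_mul].
Qed.

Lemma fp_iter_00 k : fp_iter q k 0%nat 0%nat = 0.
Proof. destruct k; [reflexivity | apply fp_map_00]. Qed.

Lemma agree_below_fp_iter k m : (k <= m)%nat -> agree_below k (fp_iter q k) (fp_iter q m).
Proof.
  revert m. induction k as [|k IHk]; intros m Hkm; [intros n i Hn; lia|].
  destruct m as [|m]; [lia|].
  apply agree_below_fp_map; try apply fp_iter_00. apply IHk. lia.
Qed.

Lemma agree_below_fp_solution k : agree_below k (fp_solution q) (fp_iter q k).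
Proof.
  intros n i Hn. unfold fp_solution.
  destruct (Nat.le_ge_cases (S n) k) as [Hle|Hge].
  - apply agree_below_fp_iter; [exact Hle | lia].
  - symmetry. apply agree_below_fp_iter; [exact Hge | exact Hn].
Qed.

Lemma fp_solution_00 : fp_solution q 0%nat 0%nat = 0.
Proof. apply fp_iter_00. Qed.

Lemma fp_solution_fixed n i : fp_map q (fp_solution q) n i = fp_solution q n i.
Proof.
  rewrite (agree_below_fp_map (S n) _ (fp_iter q (S n))); try lia;
    [|apply fp_solution_00 | apply fp_iter_00 | apply agree_below_fp_solution].
  change (fp_map q (fp_iter q (S n))) with (fp_iter q (S (S n))).
  symmetry. apply agree_below_fp_solution. lia.
Qed.

End FormalFixedPoint.

(* For [norm_le r a (2 r)], [y - a] has norm at most [3 r], so [Q(y - a)] has norm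
   at most [1/5] and [fp_correction] at most [1/2]: [fp_map] preserves the ball
   of radius [2 r]. *)
Section Majorant.

Variables (q : nat -> R) (r : R).
Hypotheses (q_0 : q 0%nat = 0) (r_ge0 : 0 <= r).
Hypothesis q_conv : ex_series (fun m => Rabs (q m) * (3 * r) ^ m).
Hypothesis q_small : Series (fun m => Rabs (q m) * (3 * r) ^ m) <= / 5.

Section Shift.

Variables (a : ps2) (g : nat -> R).
Hypotheses (a_00 : a 0%nat 0%nat = 0) (a_le : norm_le r a (2 * r)).
Hypothesis g_conv : ex_series (fun m => Rabs (g m) * (3 * r) ^ m).

Lemma norm_le_y_minus : norm_le r (y_minus a) (3 * r).
Proof.
  apply (norm_le_weaken r _ (r + Rabs (-1) * (2 * r))).
  - apply norm_le_add; [exact r_ge0 | now apply norm_le_Y | now apply norm_le_scal].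
  - rewrite Rabs_left; lra.
Qed.

Lemma y_minus_00 : y_minus a 0%nat 0%nat = 0.
Proof. unfold y_minus, ps2_add, ps2_scal, ps2_Y. rewrite a_00. simpl. ring. Qed.

Lemma norm_le_comp_y_minus :
  norm_le r (ps2_comp g (y_minus a)) (Series (fun m => Rabs (g m) * (3 * r) ^ m)).
Proof. apply (norm_le_comp r (3 * r)); auto using norm_le_y_minus, y_minus_00. Qed.

Variables x y : R.
Hypotheses (x_le : Rabs x <= r) (y_le : Rabs y <= r).

Lemma eval2_y_minus : eval2 (y_minus a) x y = y - eval2 a x y.
Proof.
  unfold y_minus. rewrite (eval2_add r); auto.
  - rewrite eval2_scal, eval2_Y. ring.
  - apply (norm_le_Y r r_ge0).
  - apply (norm_le_scal r r_ge0 (-1) a _ a_le).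
Qed.

Lemma eval2_comp_y_minus :
  eval2 (ps2_comp g (y_minus a)) x y = PSeries g (y - eval2 a x y).
Proof.
  rewrite <- eval2_y_minus. apply (eval2_comp r (3 * r)); auto using norm_le_y_minus, y_minus_00.
Qed.

End Shift.

Section Step.

Variables (a : ps2) (x y : R).
Hypotheses (a_00 : a 0%nat 0%nat = 0) (a_le : norm_le r a (2 * r)).

Lemma norm_le_fp_correction : norm_le r (fp_correction q a) (1 / 2).
Proof.
  pose proof (norm_le_comp_y_minus a q a_00 a_le q_conv) as HQ.
  set (K := Series (fun m => Rabs (q m) * (3 * r) ^ m)) in HQ.
  assert (K_ge0 : 0 <= K) by exact (norm_le_ge0 r r_ge0 _ _ HQ).
  apply (norm_le_weaken r _ (Rabs 2 * K + K * K)).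
  - apply norm_le_add; [exact r_ge0 | now apply norm_le_scal | now apply norm_le_mul].
  - rewrite Rabs_right by lra. unfold K in *. nra.
Qed.

Lemma norm_le_fp_map : norm_le r (fp_map q a) (2 * r).
Proof.
  apply (norm_le_weaken r _ (r + Rabs (-1) * (2 * r * (1 / 2)))).
  - apply norm_le_add; [exact r_ge0 | now apply norm_le_X |].
    apply norm_le_scal; [exact r_ge0|]. apply norm_le_mul; [exact r_ge0 | exact a_le |].
    exact norm_le_fp_correction.
  - rewrite Rabs_left; lra.
Qed.

Hypotheses (x_le : Rabs x <= r) (y_le : Rabs y <= r).

Lemma eval2_fp_correction :
  eval2 (fp_correction q a) x y =
  2 * PSeries q (y - eval2 a x y) + PSeries q (y - eval2 a x y) ^ 2.
Proof.
  pose proof (norm_le_comp_y_minus a q a_00 a_le q_conv) as [HQ _].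
  unfold fp_correction.
  rewrite (eval2_add r), eval2_scal, (eval2_mul r), (eval2_comp_y_minus a q); auto.
  - ring.
  - apply (norm_le_scal r r_ge0 2 _ _ (norm_le_comp_y_minus a q a_00 a_le q_conv)).
  - apply (norm_le_mul r r_ge0 _ _ _ _ (norm_le_comp_y_minus a q a_00 a_le q_conv)
                                       (norm_le_comp_y_minus a q a_00 a_le q_conv)).
Qed.

Lemma eval2_fp_map :
  eval2 (fp_map q a) x y =
  x - eval2 a x y * (2 * PSeries q (y - eval2 a x y) + PSeries q (y - eval2 a x y) ^ 2).
Proof.
  destruct norm_le_fp_correction as [Hc _].
  unfold fp_map.
  rewrite (eval2_add r), eval2_scal, (eval2_mul r), eval2_fp_correction; auto.
  - rewrite eval2_X. ring.
  - apply a_le.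
  - apply (norm_le_X r r_ge0).
  - apply (norm_le_scal r r_ge0 (-1) _ _ (norm_le_mul r r_ge0 _ _ _ _ a_le norm_le_fp_correction)).
Qed.

End Step.

Lemma norm_le_fp_iter k : norm_le r (fp_iter q k) (2 * r).
Proof.
  induction k as [|k IHk].
  - apply (norm_le_weaken r _ 0); [|lra].
    apply (norm_le_of_dominated r r_ge0 _ (fun _ _ => 0)).
    + intros n i _. simpl. rewrite Rabs_R0. lra.
    + eapply is_series_ext; [|apply (is_series_single_term (fun _ => 0) 0); auto].
      intro n. symmetry. apply sum_eq_R0. intros. ring.
  - apply norm_le_fp_map; [now apply fp_iter_00 | exact IHk].
Qed.

Lemma norm_le_fp_solution : norm_le r (fp_solution q) (2 * r).
Proof.
  apply ex_series_nonneg_bounded; [intro n; apply homog_abs_ge0; exact r_ge0|].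
  intro N. destruct (norm_le_fp_iter (S N)) as [Hconv Hle].
  eapply Rle_trans; [|exact Hle].
  rewrite (sum_eq _ (homog (ps2_abs (fp_iter q (S N))) r r)).
  - apply is_series_partial_le; [intro n; now apply homog_abs_ge0 | now apply Series_correct].
  - intros n Hn. apply sum_eq. intros i Hi. unfold ps2_abs.
    rewrite (agree_below_fp_solution q q_0 (S N)) by lia. reflexivity.
Qed.

Lemma eval2_fp_solution x y : Rabs x <= r -> Rabs y <= r ->
  eval2 (fp_solution q) x y =
  x - eval2 (fp_solution q) x y *
      (2 * PSeries q (y - eval2 (fp_solution q) x y) +
       PSeries q (y - eval2 (fp_solution q) x y) ^ 2).
Proof.
  intros x_le y_le.
  rewrite <- (eval2_fp_map (fp_solution q) x y) by
    auto using fp_solution_00, norm_le_fp_solution.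
  unfold eval2 at 1. apply Series_ext. intro n. apply sum_eq. intros i Hi.
  now rewrite fp_solution_fixed.
Qed.

End Majorant.

(* [f = 2 u_+ / z'(t) + z(t) = 2 s (1 + Q(u_- - s)) + z(u_- - s)]. *)
Definition f_series (c q : nat -> R) (a : ps2) : ps2 :=
  ps2_add (ps2_scal 2 (ps2_add a (ps2_mul a (ps2_comp q (y_minus a)))))
          (ps2_comp c (y_minus a)).

Section FSeries.

Variables (c q : nat -> R) (r : R) (a : ps2).
Hypotheses (r_ge0 : 0 <= r) (a_00 : a 0%nat 0%nat = 0) (a_le : norm_le r a (2 * r)).
Hypotheses (q_conv : ex_series (fun m => Rabs (q m) * (3 * r) ^ m))
           (c_conv : ex_series (fun m => Rabs (c m) * (3 * r) ^ m)).

Let Q_le := norm_le_comp_y_minus r r_ge0 a q a_00 a_le q_conv.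
Let C_le := norm_le_comp_y_minus r r_ge0 a c a_00 a_le c_conv.
Let aQ_le := norm_le_mul r r_ge0 _ _ _ _ a_le Q_le.

Lemma abs_conv_f_series : abs_conv r (f_series c q a).
Proof.
  apply (norm_le_add r r_ge0 _ _ _ _ (norm_le_scal r r_ge0 2 _ _
    (norm_le_add r r_ge0 _ _ _ _ a_le aQ_le)) C_le).
Qed.

Lemma eval2_f_series x y : Rabs x <= r -> Rabs y <= r ->
  eval2 (f_series c q a) x y =
  2 * (eval2 a x y + eval2 a x y * PSeries q (y - eval2 a x y)) + PSeries c (y - eval2 a x y).
Proof.
  intros x_le y_le. unfold f_series.
  rewrite (eval2_add r), eval2_scal, (eval2_add r), (eval2_mul r); auto;
    try apply a_le; try apply Q_le; try apply aQ_le; try apply C_le.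
  - now rewrite (eval2_comp_y_minus r r_ge0 a q), (eval2_comp_y_minus r r_ge0 a c).
  - apply (norm_le_scal r r_ge0 2 _ _ (norm_le_add r r_ge0 _ _ _ _ a_le aQ_le)).
Qed.

End FSeries.

Lemma analytic2_of_abs_conv (f : R -> R -> R) (F : ps2) r : 0 < r -> abs_conv r F ->
  (forall x y, Rabs x < r -> Rabs y < r -> f x y = eval2 F x y) -> analytic2_near0 f.
Proof.
  intros r_gt0 HF Hf. exists (fun i j => F (i + j)%nat i), r. split; [exact r_gt0|].
  intros x y Hx Hy.
  assert (Hsum : forall (h : nat -> nat -> R) n,
    sum_f_R0 (fun i => h (i + (n - i))%nat i) n = sum_f_R0 (fun i => h n i) n).
  { intros h n. apply sum_eq. intros i Hi. now replace (i + (n - i))%nat with n by lia. }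
  split.
  - apply (ex_series_le_R _ (homog (ps2_abs F) r r)); [|exact HF].
    intro n. rewrite (Hsum (fun k i => Rabs (F k i) * Rabs x ^ i * Rabs y ^ (n - i))).
    rewrite Rabs_right.
    + apply Rle_trans with (Rabs (homog (ps2_abs F) (Rabs x) (Rabs y) n)); [apply Rle_abs|].
      apply (homog_le r); rewrite ?Rabs_Rabsolu; try lra. apply dominated_abs_l, dominated_abs.
    + apply Rle_ge, sum_f_R0_nonneg. intros i Hi.
      apply Rmult_le_pos; [apply Rmult_le_pos|]; try apply Rabs_pos; apply pow_le, Rabs_pos.
  - rewrite Hf by assumption. apply Series_ext. intro n.
    now rewrite (Hsum (fun k i => F k i * x ^ i * y ^ (n - i))).
Qed.

(** * Local estimates for z *)

Lemma id_plus_O2_1_at0 z : id_plus_O2_1 z -> z 0 = 0 /\ Derive z 0 = 1.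
Proof.
  intros [C [d [d_pos Hz]]].
  assert (z_0 : z 0 = 0).
  { specialize (Hz 0 ltac:(rewrite Rabs_R0; lra)).
    replace (C * 0 ^ 2) with 0 in Hz by ring. apply Rabs_le_between in Hz. lra. }
  split; [exact z_0|]. apply is_derive_unique, is_derive_Reals.
  intros eps eps_pos.
  assert (K_pos : 0 < Rabs C + 1) by (pose proof (Rabs_pos C); lra).
  assert (delta_pos : 0 < Rmin d (eps / (Rabs C + 1)))
    by (apply Rmin_pos; [lra | now apply Rdiv_lt_0_compat]).
  exists (mkposreal _ delta_pos). simpl. intros h h_neq h_lt.
  assert (h_d : Rabs h < d) by (eapply Rlt_le_trans; [exact h_lt | apply Rmin_l]).
  assert (h_eps : Rabs h * (Rabs C + 1) < eps).
  { apply (Rmult_lt_compat_r (Rabs C + 1)) in h_lt; [|exact K_pos].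
    eapply Rlt_le_trans; [exact h_lt|].
    apply Rle_trans with (eps / (Rabs C + 1) * (Rabs C + 1)).
    - apply Rmult_le_compat_r; [lra | apply Rmin_r].
    - right. field. lra. }
  assert (h_pos : 0 < Rabs h) by now apply Rabs_pos_lt.
  replace ((z (0 + h) - z 0) / h - 1) with ((z h - h) / h)
    by (rewrite Rplus_0_l, z_0; field; exact h_neq).
  unfold Rdiv. rewrite Rabs_mult, Rabs_inv.
  apply (Rmult_lt_reg_r (Rabs h)); [exact h_pos|].
  rewrite Rmult_assoc, Rinv_l, Rmult_1_r by lra.
  eapply Rle_lt_trans; [apply (Hz h h_d)|].
  replace (h ^ 2) with (Rabs h * Rabs h) by (rewrite <- Rabs_mult, Rabs_right; [ring | nra]).
  pose proof (Rle_abs C). nra.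
Qed.

Definition lipschitz_near0 (d M : R) (p : R -> R) : Prop :=
  forall a b, Rabs a <= d -> Rabs b <= d -> Rabs (p a - p b) <= M * Rabs (a - b).

Lemma Rabs_between a b w d : Rmin a b <= w <= Rmax a b -> Rabs a <= d -> Rabs b <= d ->
  Rabs w <= d.
Proof.
  intros [H1 H2] Ha Hb. apply Rabs_le_between in Ha. apply Rabs_le_between in Hb.
  apply Rabs_le_between. unfold Rmin, Rmax in *. destruct (Rle_dec a b); lra.
Qed.

Lemma C2_near0_Derive_lipschitz z : C2_near0 z ->
  exists d M, 0 < d /\ 0 < M /\ lipschitz_near0 d M (Derive z).
Proof.
  intros [d0 [d0_pos HC]].
  destruct (HC 0 ltac:(rewrite Rabs_R0; lra)) as [_ [_ z''_cont]].
  apply continuity_pt_filterlim in z''_cont.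
  destruct (proj1 (continuity_pt_locally _ _) z''_cont (mkposreal 1 Rlt_0_1)) as [d2 Hd2].
  simpl in Hd2.
  set (M := Rabs (Derive_n z 2 0) + 1).
  exists (Rmin (d0 / 2) (d2 / 2)), M.
  assert (d_pos : 0 < Rmin (d0 / 2) (d2 / 2)) by (apply Rmin_pos; pose proof (cond_pos d2); lra).
  assert (d_le0 : Rmin (d0 / 2) (d2 / 2) <= d0 / 2) by apply Rmin_l.
  assert (d_le2 : Rmin (d0 / 2) (d2 / 2) <= d2 / 2) by apply Rmin_r.
  repeat split; [exact d_pos | unfold M; pose proof (Rabs_pos (Derive_n z 2 0)); lra |].
  intros a b Ha Hb.
  destruct (MVT_gen (Derive z) b a (Derive (Derive z))) as [c [Hc Heq]].
  - intros w Hw. apply Derive_correct.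
    assert (Rabs w <= Rmin (d0 / 2) (d2 / 2)) by (apply (Rabs_between b a); auto; lra).
    apply (HC w). lra.
  - intros w Hw. apply continuity_pt_filterlim.
    assert (Rabs w <= Rmin (d0 / 2) (d2 / 2)) by now apply (Rabs_between b a).
    apply (ex_derive_continuous (K := R_AbsRing) (V := R_NormedModule)), (HC w). lra.
  - rewrite Heq, Rabs_mult. apply Rmult_le_compat_r; [apply Rabs_pos|].
    assert (Rabs c <= Rmin (d0 / 2) (d2 / 2)) by now apply (Rabs_between b a).
    assert (Hz'' : Rabs (Derive_n z 2 c - Derive_n z 2 0) < 1).
    { apply Hd2. unfold ball; simpl; unfold AbsRing_ball, abs, minus, plus, opp; simpl.
      rewrite Ropp_0, Rplus_0_r. pose proof (cond_pos d2). lra. }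
    pose proof (Rabs_triang_inv (Derive_n z 2 c) (Derive_n z 2 0)).
    change (Derive (Derive z) c) with (Derive_n z 2 c). unfold M. lra.
Qed.

Lemma C2_near0_Derive_control z : C2_near0 z -> Derive z 0 = 1 ->
  exists d M, 0 < d /\ 0 < M /\ lipschitz_near0 d M (Derive z) /\
    forall w, Rabs w <= d -> 1 / 2 <= Derive z w <= 3 / 2.
Proof.
  intros HC z'_0. destruct (C2_near0_Derive_lipschitz z HC) as [d [M [d_pos [M_pos Lip]]]].
  assert (d'_pos : 0 < Rmin d (1 / (2 * M)))
    by (apply Rmin_pos; [lra | apply Rdiv_lt_0_compat; lra]).
  exists (Rmin d (1 / (2 * M))), M.
  split; [exact d'_pos|]. split; [exact M_pos|]. split.
  - intros a b Ha Hb. apply Lip; eapply Rle_trans; eauto; apply Rmin_l.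
  - intros w Hw.
    assert (Hw' : M * Rabs w <= 1 / 2).
    { apply Rle_trans with (M * (1 / (2 * M))).
      - apply Rmult_le_compat_l; [lra|]. eapply Rle_trans; [exact Hw | apply Rmin_r].
      - right. field. lra. }
    pose proof (Lip w 0 ltac:(eapply Rle_trans; [exact Hw | apply Rmin_l])
                  ltac:(rewrite Rabs_R0; lra)) as Hl.
    rewrite z'_0, Rminus_0_r in Hl. apply Rabs_le_between in Hl. lra.
Qed.

(* [(a - b) p(a)^2 p(b)^2 = x (p(a) - p(b)) (p(a) + p(b))], whose absolute value
   is at most [3 M |x| |a - b|]. *)
Lemma implicit_eq_unique (p : R -> R) d M x y a b : 0 < M -> lipschitz_near0 d M p ->
  (forall w, Rabs w <= d -> 1 / 2 <= p w <= 3 / 2) -> Rabs a <= d -> Rabs b <= d ->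
  48 * M * Rabs x < 1 -> y = x / p a ^ 2 + a -> y = x / p b ^ 2 + b -> a = b.
Proof.
  intros M_pos Lip Hp Ha Hb Hx Ea Eb.
  destruct (Hp a Ha) as [pa1 pa2], (Hp b Hb) as [pb1 pb2].
  assert (E : (a - b) * (p a ^ 2 * p b ^ 2) = x * (p a - p b) * (p a + p b)).
  { replace (a - b) with (x / p b ^ 2 - x / p a ^ 2) by lra. field. lra. }
  assert (E' : Rabs (a - b) * (p a ^ 2 * p b ^ 2) = Rabs x * Rabs (p a - p b) * (p a + p b)).
  { rewrite <- (Rabs_right (p a ^ 2 * p b ^ 2)), <- (Rabs_right (p a + p b))
      by (apply Rle_ge; first [lra | apply Rmult_le_pos; apply pow2_ge_0]).
    now rewrite <- !Rabs_mult, E. }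
  assert (1 / 4 <= p a ^ 2) by nra. assert (1 / 4 <= p b ^ 2) by nra.
  assert (1 / 16 <= p a ^ 2 * p b ^ 2) by nra.
  pose proof (Lip a b Ha Hb). pose proof (Rabs_pos (a - b)). pose proof (Rabs_pos x).
  assert (Rabs (a - b) * (1 / 16) <= Rabs (a - b) * (p a ^ 2 * p b ^ 2))
    by (apply Rmult_le_compat_l; lra).
  assert (Rabs x * Rabs (p a - p b) * (p a + p b) <= Rabs x * (M * Rabs (a - b)) * 3).
  { apply Rmult_le_compat; [apply Rmult_le_pos; apply Rabs_pos | lra | | lra].
    now apply Rmult_le_compat_l. }
  assert (Rabs (a - b) * (1 / 16 - 3 * M * Rabs x) <= 0) by nra.
  assert (Hab : Rabs (a - b) = 0) by nra.
  apply Rabs_eq_0 in Hab. lra.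
Qed.

(* With [s = x / p ^ 2]: [2 x / p + z(t) - (x + y) = - s (p - 1) ^ 2 + (z(t) - t)]. *)
Lemma f_error_bound x y t p zt M C : Rabs x <= 1 -> 1 / 2 <= p ->
  Rabs (p - 1) <= M * Rabs t -> Rabs (zt - t) <= C * t ^ 2 -> y = x / p ^ 2 + t ->
  Rabs (2 * x / p + zt - (x + y)) <= 32 * (4 * M ^ 2 + Rabs C) * (x ^ 2 + y ^ 2).
Proof.
  intros Hx Hp Hp1 Hzt Hy.
  set (s := x / p ^ 2) in Hy.
  assert (p2 : 1 / 4 <= p ^ 2) by nra.
  assert (Hs : Rabs s <= 4 * Rabs x).
  { unfold s, Rdiv. rewrite Rabs_mult, Rabs_inv, (Rabs_right (p ^ 2)) by lra.
    apply (Rmult_le_reg_r (p ^ 2)); [lra|].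
    rewrite Rmult_assoc, Rinv_l by lra. pose proof (Rabs_pos x). nra. }
  replace (2 * x / p + zt - (x + y)) with (- s * (p - 1) ^ 2 + (zt - t))
    by (rewrite Hy; unfold s; field; lra).
  assert (Hq : (p - 1) ^ 2 <= M ^ 2 * t ^ 2).
  { rewrite <- (pow2_abs (p - 1)), <- (pow2_abs t).
    replace (M ^ 2 * Rabs t ^ 2) with ((M * Rabs t) ^ 2) by ring.
    apply pow_incr. split; [apply Rabs_pos | exact Hp1]. }
  assert (Ht : t ^ 2 <= 32 * (x ^ 2 + y ^ 2)).
  { assert (s ^ 2 <= 16 * x ^ 2).
    { rewrite <- (pow2_abs s), <- (pow2_abs x). pose proof (Rabs_pos s). nra. }
    replace t with (y - s) by lra. nra. }
  eapply Rle_trans; [apply Rabs_triang|].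
  rewrite Rabs_mult, Rabs_Ropp, (Rabs_right ((p - 1) ^ 2)) by (apply Rle_ge, pow2_ge_0).
  pose proof (Rabs_pos s). pose proof (Rabs_pos x). pose proof (Rle_abs C).
  pose proof (pow2_ge_0 t). pose proof (pow2_ge_0 (p - 1)). pose proof (pow2_ge_0 M).
  assert (Rabs s * (p - 1) ^ 2 <= 4 * M ^ 2 * t ^ 2) by nra.
  assert (C * t ^ 2 <= Rabs C * t ^ 2) by nra.
  assert ((4 * M ^ 2 + Rabs C) * t ^ 2 <= (4 * M ^ 2 + Rabs C) * (32 * (x ^ 2 + y ^ 2)))
    by (apply Rmult_le_compat_l; [pose proof (Rabs_pos C); lra | exact Ht]).
  lra.
Qed.

Lemma sum_plus_O2_f_of z tt : C2_near0 z -> local_solution z tt -> id_plus_O2_1 z ->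
  sum_plus_O2_2 (f_of z tt).
Proof.
  intros HC [tt_small [d2 [d2_pos tt_eq]]] Hid.
  destruct (id_plus_O2_1_at0 z Hid) as [_ z'_0].
  destruct (C2_near0_Derive_control z HC z'_0) as [dl [M [dl_pos [M_pos [Lip Hp]]]]].
  destruct Hid as [C [dI [dI_pos HI]]].
  destruct (tt_small (Rmin dl dI)) as [d1 [d1_pos tt_lt]]; [now apply Rmin_pos|].
  exists (32 * (4 * M ^ 2 + Rabs C)), (Rmin 1 (Rmin d1 d2)).
  split; [repeat apply Rmin_pos; lra|].
  intros x y Hx Hy.
  apply Rmin_Rgt_l in Hx as [Hx_1 [Hx_d1 Hx_d2]%Rmin_Rgt_l].
  apply Rmin_Rgt_l in Hy as [_ [Hy_d1 Hy_d2]%Rmin_Rgt_l].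
  specialize (tt_lt x y Hx_d1 Hy_d1). apply Rmin_Rgt_l in tt_lt as [Htl HtI].
  unfold f_of. apply (f_error_bound _ _ (tt x y)); [lra | apply Hp; lra | | | now apply tt_eq].
  - pose proof (Lip (tt x y) 0 ltac:(lra) ltac:(rewrite Rabs_R0; lra)) as Hl.
    now rewrite z'_0, !Rminus_0_r in Hl.
  - now apply HI.
Qed.

(** * One-variable power series *)

Lemma CV_radius_gt_of_abs_conv (c : nat -> R) r0 :
  (forall x, Rabs x < r0 -> ex_series (fun n => Rabs (c n) * Rabs x ^ n)) ->
  forall w, Rabs w < r0 -> Rbar_lt (Rabs w) (CV_radius c).
Proof.
  intros Hc w Hw. set (w' := (Rabs w + r0) / 2).
  assert (Hw' : Rabs w < w' < r0) by (unfold w'; lra).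
  assert (Hd : CV_disk c w').
  { unfold CV_disk. eapply ex_series_ext; [|apply (Hc w')].
    - intro n. simpl. now rewrite Rabs_mult, <- RPow_abs.
    - rewrite Rabs_right; [lra|]. pose proof (Rabs_pos w). lra. }
  destruct (Lub_Rbar_correct (CV_disk c)) as [Hub _].
  eapply Rbar_lt_le_trans; [|apply (Hub w' Hd)]. simpl. lra.
Qed.

Lemma PSeries_drop_constant (a : nat -> R) w : ex_pseries a w ->
  PSeries a w = a 0%nat + PSeries (PS_incr_1 (PS_decr_1 a)) w.
Proof. intros Ha. now rewrite PSeries_incr_1, <- PSeries_decr_1. Qed.

Lemma Series_abs_pow_small (q : nat -> R) R0 r : q 0%nat = 0 -> 0 < R0 -> 0 <= r <= R0 ->
  ex_series (fun m => Rabs (q m) * R0 ^ m) ->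
  ex_series (fun m => Rabs (q m) * r ^ m) /\
  Series (fun m => Rabs (q m) * r ^ m) <= r / R0 * Series (fun m => Rabs (q m) * R0 ^ m).
Proof.
  intros q_0 R0_pos r_bounds HR0.
  assert (ratio : 0 <= r / R0 <= 1).
  { split; [apply Rdiv_le_0_compat; lra|].
    apply (Rmult_le_reg_r R0); [lra|]. unfold Rdiv. rewrite Rmult_assoc, Rinv_l; lra. }
  assert (Hle : forall m, 0 <= Rabs (q m) * r ^ m <= r / R0 * (Rabs (q m) * R0 ^ m)).
  { intro m. split; [apply Rmult_le_pos; [apply Rabs_pos | apply pow_le; lra]|].
    destruct m as [|m]; [rewrite q_0, Rabs_R0; simpl; lra|].
    replace (r ^ S m) with ((r / R0) ^ S m * R0 ^ S m)
      by (rewrite <- Rpow_mult_distr; f_equal; field; lra).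
    assert ((r / R0) ^ S m <= r / R0).
    { simpl. pose proof (pow_le _ m (proj1 ratio)).
      assert ((r / R0) ^ m <= 1) by (rewrite <- (pow1 m); apply pow_incr; lra). nra. }
    apply Rle_trans with (Rabs (q (S m)) * (r / R0 * R0 ^ S m)); [|right; ring].
    apply Rmult_le_compat_l; [apply Rabs_pos|].
    apply Rmult_le_compat_r; [apply pow_le; lra | assumption]. }
  assert (Hex : ex_series (fun m => r / R0 * (Rabs (q m) * R0 ^ m))).
  { exists (r / R0 * Series (fun m => Rabs (q m) * R0 ^ m)).
    apply (is_series_scal_l (K := R_AbsRing) (V := R_NormedModule)). now apply Series_correct. }
  split.
  - apply (ex_series_le_R _ (fun m => r / R0 * (Rabs (q m) * R0 ^ m))); [|exact Hex].
    intro m. rewrite Rabs_right; [apply Hle | apply Rle_ge, Hle].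
  - rewrite <- Series_scal_l. now apply Series_le.
Qed.

Lemma Series_abs_pow_vanishing (q : nat -> R) R0 eps : q 0%nat = 0 -> 0 < R0 -> 0 < eps ->
  ex_series (fun m => Rabs (q m) * R0 ^ m) ->
  exists delta, 0 < delta /\ forall r, 0 <= r <= delta ->
    ex_series (fun m => Rabs (q m) * r ^ m) /\ Series (fun m => Rabs (q m) * r ^ m) <= eps.
Proof.
  intros q_0 R0_pos eps_pos HR0.
  set (K := Series (fun m => Rabs (q m) * R0 ^ m)).
  assert (K_ge0 : 0 <= K).
  { apply Series_nonneg; [|exact HR0]. intro m.
    apply Rmult_le_pos; [apply Rabs_pos | apply pow_le; lra]. }
  exists (Rmin R0 (eps * R0 / (K + 1))).
  split; [apply Rmin_pos; [lra | apply Rdiv_lt_0_compat; nra]|].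
  intros r [r_ge0 r_le].
  destruct (Series_abs_pow_small q R0 r q_0 R0_pos) as [Hex Hle];
    [split; [lra | eapply Rle_trans; [exact r_le | apply Rmin_l]] | exact HR0 |].
  split; [exact Hex|]. eapply Rle_trans; [exact Hle|]. fold K.
  assert (r * (K + 1) <= eps * R0).
  { apply (Rmult_le_compat_r (K + 1)) in r_le; [|lra].
    eapply Rle_trans; [exact r_le|].
    apply Rle_trans with (eps * R0 / (K + 1) * (K + 1)); [apply Rmult_le_compat_r, Rmin_r; lra|].
    right. field. lra. }
  apply (Rmult_le_reg_r R0); [exact R0_pos|].
  replace (r / R0 * K * R0) with (r * K) by (field; lra). nra.
Qed.

Lemma locally_of_Rabs (P : R -> Prop) x e : 0 < e ->
  (forall y, Rabs (y - x) < e -> P y) -> locally x P.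
Proof. intros He H. exists (mkposreal e He). intros y Hy. now apply H. Qed.

Section DerivativeSeries.

Variables (z : R -> R) (c : nat -> R) (r0 : R).
Hypothesis z_series : forall x, Rabs x < r0 ->
  ex_series (fun n => Rabs (c n) * Rabs x ^ n) /\ z x = Series (fun n => c n * x ^ n).

Let radius : forall w, Rabs w < r0 -> Rbar_lt (Rabs w) (CV_radius c) :=
  CV_radius_gt_of_abs_conv c r0 (fun x Hx => proj1 (z_series x Hx)).

Lemma Derive_analytic1 w : Rabs w < r0 -> Derive z w = PSeries (PS_derive c) w.
Proof.
  intros Hw. rewrite <- Derive_PSeries by now apply radius.
  apply Derive_ext_loc, (locally_of_Rabs _ _ (r0 - Rabs w)); [lra|]. intros u Hu.
  apply z_series. pose proof (Rabs_triang (u - w) w) as Htri.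
  replace (u - w + w) with u in Htri by ring. lra.
Qed.

Lemma Derive_analytic1_shift : Derive z 0 = 1 -> forall w, Rabs w < r0 ->
  Derive z w = 1 + PSeries (PS_incr_1 (PS_decr_1 (PS_derive c))) w.
Proof.
  intros z'_0 w Hw.
  assert (r0_pos : 0 < r0) by (pose proof (Rabs_pos w); lra).
  rewrite Derive_analytic1, PSeries_drop_constant by (auto; now apply ex_pseries_derive, radius).
  rewrite <- PSeries_0, <- Derive_analytic1, z'_0 by (rewrite Rabs_R0; lra). reflexivity.
Qed.

Lemma ex_series_shift_abs R0 : 0 <= R0 < r0 ->
  ex_series (fun m => Rabs (PS_incr_1 (PS_decr_1 (PS_derive c)) m) * R0 ^ m).
Proof.
  intros HR0.
  apply (ex_series_le_R _ (fun m => Rabs (PS_derive c m * R0 ^ m))).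
  - intro m. rewrite !Rabs_mult, Rabs_Rabsolu.
    apply Rmult_le_compat_r; [apply Rabs_pos|].
    destruct m as [|m]; [|apply Rle_refl].
    change (PS_incr_1 _ 0) with 0. rewrite Rabs_R0. apply Rabs_pos.
  - apply CV_disk_inside. rewrite CV_radius_derive. apply radius. rewrite Rabs_right; lra.
Qed.

End DerivativeSeries.

Lemma f_of_0_l z tt : local_solution z tt ->
  exists d, 0 < d /\ forall y, Rabs y < d -> f_of z tt 0 y = z y.
Proof.
  intros [_ [d [d_pos tt_eq]]]. exists d. split; [exact d_pos|]. intros y Hy.
  pose proof (tt_eq 0 y ltac:(rewrite Rabs_R0; lra) Hy) as E.
  unfold Rdiv in E. rewrite Rmult_0_l, Rplus_0_l in E.
  unfold f_of. rewrite <- E. unfold Rdiv. ring.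
Qed.

Lemma sum_f_R0_pow0 (h : nat -> R) n : sum_f_R0 (fun i => h i * 0 ^ i) n = h 0%nat.
Proof. induction n as [|n IHn]; simpl; [ring | rewrite IHn; ring]. Qed.

Lemma analytic2_near0_restrict f : analytic2_near0 f -> analytic1_near0 (f 0).
Proof.
  intros [a [r [r_pos Ha]]]. exists (fun n => a 0%nat n), r. split; [exact r_pos|].
  intros x Hx. destruct (Ha 0 x ltac:(rewrite Rabs_R0; lra) Hx) as [Habs Hf]. split.
  - eapply ex_series_ext; [|exact Habs]. intro n. rewrite Rabs_R0.
    rewrite (sum_eq _ (fun i => Rabs (a i (n - i)%nat) * Rabs x ^ (n - i) * 0 ^ i))
      by (intros; ring).
    now rewrite sum_f_R0_pow0, Nat.sub_0_r.
  - rewrite Hf. apply Series_ext. intro n.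
    rewrite (sum_eq _ (fun i => a i (n - i)%nat * x ^ (n - i) * 0 ^ i)) by (intros; ring).
    now rewrite sum_f_R0_pow0, Nat.sub_0_r.
Qed.

Lemma sum_plus_O2_2_restrict f : sum_plus_O2_2 f -> id_plus_O2_1 (f 0).
Proof.
  intros [C [d [d_pos Hf]]]. exists C, d. split; [exact d_pos|]. intros x Hx.
  specialize (Hf 0 x ltac:(rewrite Rabs_R0; lra) Hx).
  now replace (0 ^ 2 + x ^ 2) with (x ^ 2) in Hf by ring; rewrite Rplus_0_l in Hf.
Qed.

Lemma analytic1_near0_ext_loc g z d : 0 < d -> (forall y, Rabs y < d -> g y = z y) ->
  analytic1_near0 g -> analytic1_near0 z.
Proof.
  intros d_pos Hgz [a [r [r_pos Ha]]]. exists a, (Rmin r d). split; [now apply Rmin_pos|].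
  intros x Hx. apply Rmin_Rgt_l in Hx as [Hxr Hxd].
  rewrite <- Hgz by exact Hxd. now apply Ha.
Qed.

Lemma id_plus_O2_1_ext_loc g z d : 0 < d -> (forall y, Rabs y < d -> g y = z y) ->
  id_plus_O2_1 g -> id_plus_O2_1 z.
Proof.
  intros d_pos Hgz [C [r [r_pos Hg]]]. exists C, (Rmin r d). split; [now apply Rmin_pos|].
  intros x Hx. apply Rmin_Rgt_l in Hx as [Hxr Hxd].
  rewrite <- Hgz by exact Hxd. now apply Hg.
Qed.

Section Converse.

Variables (z : R -> R) (tt : R -> R -> R) (c q : nat -> R) (r0 dl M rho : R).
Hypotheses (q_0 : q 0%nat = 0) (M_pos : 0 < M) (rho_pos : 0 < rho).
Hypotheses (rho_dl : 3 * rho <= dl) (rho_r0 : 3 * rho < r0) (rho_M : 48 * M * rho <= 1).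
Hypothesis z_eq : forall w, Rabs w < r0 -> z w = PSeries c w.
Hypothesis z'_eq : forall w, Rabs w < r0 -> Derive z w = 1 + PSeries q w.
Hypothesis z'_lip : lipschitz_near0 dl M (Derive z).
Hypothesis z'_between : forall w, Rabs w <= dl -> 1 / 2 <= Derive z w <= 3 / 2.
Hypothesis tt_small : forall x y, Rabs x < rho -> Rabs y < rho -> Rabs (tt x y) <= dl.
Hypothesis tt_eq : forall x y, Rabs x < rho -> Rabs y < rho ->
  y = x / Derive z (tt x y) ^ 2 + tt x y.
Hypotheses (q_conv : ex_series (fun m => Rabs (q m) * (3 * rho) ^ m))
           (q_small : Series (fun m => Rabs (q m) * (3 * rho) ^ m) <= / 5)
           (c_conv : ex_series (fun m => Rabs (c m) * (3 * rho) ^ m)).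

Let s_le : norm_le rho (fp_solution q) (2 * rho) :=
  norm_le_fp_solution q rho q_0 (Rlt_le _ _ rho_pos) q_conv q_small.

Variables x y : R.
Hypotheses (x_lt : Rabs x < rho) (y_lt : Rabs y < rho).

Let s := eval2 (fp_solution q) x y.

Let t_le : Rabs (y - s) <= 3 * rho.
Proof.
  assert (Hs : Rabs s <= ps2_norm rho (fp_solution q))
    by (apply (eval2_abs_le rho); [lra | lra | apply s_le]).
  destruct s_le as [_ Hnorm].
  pose proof (Rabs_triang y (- s)) as Htri. rewrite Rabs_Ropp in Htri. unfold Rminus. lra.
Qed.

Let x_eq : x = s * Derive z (y - s) ^ 2.
Proof.
  rewrite z'_eq by lra.
  pose proof (eval2_fp_solution q rho q_0 (Rlt_le _ _ rho_pos) q_conv q_small x y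
                ltac:(lra) ltac:(lra)) as E.
  fold s in E. nra.
Qed.

Lemma tt_eq_fp_solution : tt x y = y - s.
Proof.
  apply (implicit_eq_unique (Derive z) dl M x y); auto; [lra | nra |].
  assert (Derive z (y - s) <> 0) by (pose proof (z'_between (y - s)); lra).
  rewrite x_eq. field. auto.
Qed.

Lemma f_of_eq_eval2 : f_of z tt x y = eval2 (f_series c q (fp_solution q)) x y.
Proof.
  rewrite (eval2_f_series c q rho); try lra; auto using fp_solution_00.
  fold s. unfold f_of. rewrite tt_eq_fp_solution, z_eq by lra.
  assert (Derive z (y - s) <> 0) by (pose proof (z'_between (y - s)); lra).
  rewrite x_eq at 1. rewrite z'_eq in * by lra. field. auto.
Qed.

End Converse.

Lemma analytic2_f_of z tt : C2_near0 z -> local_solution z tt ->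
  analytic1_near0 z -> id_plus_O2_1 z -> analytic2_near0 (f_of z tt).
Proof.
  intros HC [tt_small [d2 [d2_pos tt_eq]]] [c [r0 [r0_pos z_series]]] Hid.
  destruct (id_plus_O2_1_at0 z Hid) as [_ z'_0].
  destruct (C2_near0_Derive_control z HC z'_0) as [dl [M [dl_pos [M_pos [Lip Hbetween]]]]].
  destruct (tt_small dl dl_pos) as [d1 [d1_pos tt_lt]].
  set (q := PS_incr_1 (PS_decr_1 (PS_derive c))).
  assert (q_conv0 : ex_series (fun m => Rabs (q m) * (r0 / 2) ^ m))
    by (apply (ex_series_shift_abs z c r0 z_series); lra).
  destruct (Series_abs_pow_vanishing q (r0 / 2) (/ 5)) as [delta [delta_pos q_small]];
    [reflexivity | lra | lra | exact q_conv0 |].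
  set (rho := Rmin (delta / 3)
                (Rmin (r0 / 6) (Rmin (dl / 3) (Rmin (1 / (48 * M)) (Rmin d1 d2))))).
  assert (rho_pos : 0 < rho) by (repeat apply Rmin_pos; try apply Rdiv_lt_0_compat; lra).
  assert (rho_le : rho <= delta / 3 /\ rho <= r0 / 6 /\ rho <= dl / 3 /\
                   rho <= 1 / (48 * M) /\ rho <= d1 /\ rho <= d2).
  { unfold rho. repeat split;
      repeat first [apply Rle_refl | apply Rmin_l | apply (Rle_trans _ _ _ (Rmin_r _ _))]. }
  destruct rho_le as [rho_delta [rho_r0 [rho_dl [rho_M [rho_d1 rho_d2]]]]].
  destruct (q_small (3 * rho)) as [q_conv q_le]; [lra|].
  assert (c_conv : ex_series (fun m => Rabs (c m) * (3 * rho) ^ m)).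
  { destruct (z_series (3 * rho)) as [Hc _]; [rewrite Rabs_right; lra|].
    now rewrite Rabs_right in Hc by lra. }
  apply (analytic2_of_abs_conv _ (f_series c q (fp_solution q)) rho rho_pos).
  - apply (abs_conv_f_series c q rho); try lra; auto.
    + now apply fp_solution_00.
    + apply norm_le_fp_solution; auto; lra.
  - intros x y Hx Hy. apply (f_of_eq_eval2 z tt c q r0 dl M rho); auto; try lra.
    + apply (Rmult_le_reg_r (/ (48 * M))); [apply Rinv_0_lt_compat; lra|].
      replace (48 * M * rho * / (48 * M)) with rho by (field; lra). lra.
    + intros w Hw. apply (z_series w Hw).
    + exact (Derive_analytic1_shift z c r0 z_series z'_0).
    + intros x' y' Hx' Hy'. left. apply tt_lt; lra.
    + intros x' y' Hx' Hy'. apply tt_eq; lra.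
Qed.

Theorem lemma13 (z : R -> R) (tt : R -> R -> R) :
  C2_near0 z -> Derive z 0 <> 0 -> local_solution z tt ->
  ((analytic2_near0 (f_of z tt) /\ sum_plus_O2_2 (f_of z tt)) <->
   (analytic1_near0 z /\ id_plus_O2_1 z)).
Proof.
  intros HC _ Hls. split.
  - intros [Hf_an Hf_O2].
    destruct (f_of_0_l z tt Hls) as [d [d_pos Hf0]].
    split.
    + exact (analytic1_near0_ext_loc _ z d d_pos Hf0 (analytic2_near0_restrict _ Hf_an)).
    + exact (id_plus_O2_1_ext_loc _ z d d_pos Hf0 (sum_plus_O2_2_restrict _ Hf_O2)).
  - intros [Hz_an Hz_O2]. split.
    + now apply analytic2_f_of.
    + now apply sum_plus_O2_f_of.
Qed.
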